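(* Fix a positive integer $d$. Let $S^i$ be the quotient of $U^i$ by the two-sided ideal generated by $$\mathbf d_1+\cdots+\mathbf d_n-d,\qquad \prod_{k=0}^d(\mathbf h_i-k),\qquad \prod_{k=0}^d(\mathbf h_{\bar i}-k)\qquad(1\le i\le n),$$ and let $S$ be the quotient of $U(\mathfrak{gl}_n(\mathbb C)\oplus\mathfrak{gl}_n(\mathbb C))$ by the two-sided ideal generated by $$h_1+\cdots+h_n+h_{\bar1}+\cdots+h_{\bar n}-d,\qquad \prod_{k=0}^d(h_i-k),\qquad \prod_{k=0}^d(h_{\bar i}-k)\qquad(1\le i\le n).$$ Then $\rho$ induces an algebra isomorphism $S^i\cong S$.
   Context: Fix $n\ge1$. $\mathfrak g=\mathfrak{gl}_{2n}(\mathbb C)$ with $E_i=E_{i,i+1}$, $F_i=E_{i+1,i}$, $H_i=E_{i,i}$; $\theta(X)=JXJ^{-1}$ ($J$ antidiagonal permutation matrix); $U^i=U(\mathfrak g^\theta)$. Set $\mathbf e_i=E_i+F_{2n-i}$, $\mathbf f_i=F_i+E_{2n-i}$ ($1\le i\le n-1$), $\mathbf t=E_n+F_n$, $\mathbf d_i=H_i+H_{2n+1-i}$. $\rho:U^i\to U(\mathfrak{gl}_n\oplus\mathfrak{gl}_n)$ is the algebra isomorphism with $\rho(\mathbf e_i)=e_i+e_{\bar i}$, $\rho(\mathbf f_i)=f_i+f_{\bar i}$, $\rho(\mathbf d_i)=h_i+h_{\bar i}$, $\rho(\mathbf t)=h_n-h_{\bar n}$ ($e_i,f_i,h_i$ resp.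 $e_{\bar i},f_{\bar i},h_{\bar i}$ the Chevalley generators of the first resp. second copy of $\mathfrak{gl}_n$). Let $\mu_i$ be dual to $H_i$, $\alpha_i=\mu_i-\mu_{i+1}$; $X_{\alpha_i}=\mathbf e_i$ ($i\le n-1$), $X_{\alpha_n}=\mathbf t$, $X_{\alpha_i}=\mathbf f_{2n-i}$ ($n+1\le i\le 2n-1$), $X_{\mu_i-\mu_j}=[X_{\alpha_i},X_{\mu_{i+1}-\mu_j}]$ ($j\ge i+2$). Define $\mathbf t_n=\mathbf t$, $\mathbf t_{i-1}=\mathbf t_i+X_{\mu_{i-1}-\mu_{2n+2-i}}$ ($2\le i\le n$), and $\mathbf h_i=\tfrac12(\mathbf t_i+\mathbf d_i)$, $\mathbf h_{\bar i}=\tfrac12(-\mathbf t_i+\mathbf d_i)$ for $1\le i\le n$. *)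

From HB Require Import structures.
From mathcomp Require Import all_boot all_order all_algebra.
Set Implicit Arguments. Unset Strict Implicit. Unset Printing Implicit Defensive.
Import Order.TTheory GRing.Theory Num.Theory.
Local Open Scope ring_scope.

Definition lin_map (C : numClosedFieldType) (L B : lmodType C) (f : L -> B) : Prop :=
  forall (c : C) (x y : L), f (c *: x + y) = c *: f x + f y.

Definition alg_morph (C : numClosedFieldType) (A B : algType C) (g : A -> B) : Prop :=
  [/\ g 1 = 1, (forall a b, g (a * b) = g a * g b)
    & (forall (c : C) a b, g (c *: a + b) = c *: g a + g b)].

Definition lie_map (C : numClosedFieldType) (L : lmodType C) (P : L -> Prop)
  (br : L -> L -> L) (B : algType C) (f : L -> B) : Prop :=
  forall x y, P x -> P y -> f (br x y) = f x * f y - f y * f x.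

(* (A, iota) is a universal enveloping algebra of the Lie algebra
   g = {x : L | P x} with bracket br (iota only matters on P). *)
Definition is_UEA (C : numClosedFieldType) (L : lmodType C) (P : L -> Prop)
  (br : L -> L -> L) (A : algType C) (iota : L -> A) : Prop :=
  [/\ lin_map iota, lie_map P br iota &
    forall (B : algType C) (f : L -> B), lin_map f -> lie_map P br f ->
      (exists g : A -> B, alg_morph g /\ forall x, P x -> g (iota x) = f x) /\
      (forall g1 g2 : A -> B, alg_morph g1 -> alg_morph g2 ->
         (forall x, P x -> g1 (iota x) = g2 (iota x)) -> forall a, g1 a = g2 a)].

Definition in_ideal (A : nzRingType) (P : A -> Prop) (x : A) : Prop :=
  exists (m : nat) (a b c : 'I_m -> A),
    (forall k, P (c k)) /\ x = \sum_(k < m) a k * c k * b k.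

Section Mat.
Context (C : numClosedFieldType).

(* elementary matrix E_{i,j} of size m, with 1-based indices i j *)
Definition Em (m i j : nat) : 'M[C]_m :=
  \matrix_(a, b) ((((a : nat) == i.-1) && ((b : nat) == j.-1))%:R).

Definition mcomm (m : nat) (X Y : 'M[C]_m) : 'M[C]_m := X *m Y - Y *m X.

Definition pcomm (m : nat) (X Y : ('M[C]_m * 'M[C]_m)%type)
  : ('M[C]_m * 'M[C]_m)%type := (mcomm X.1 Y.1, mcomm X.2 Y.2).

Definition Jm (m : nat) : 'M[C]_m := \matrix_(a, b) (((a : nat) + b == m.-1)%N%:R).
Definition theta (m : nat) (X : 'M[C]_m) : 'M[C]_m := Jm m *m X *m invmx (Jm m).
Definition fixed_by_theta (m : nat) (X : 'M[C]_m) : Prop := theta X = X.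

Context (n : nat).
Local Notation N := (n.*2).

Definition bE (i : nat) : 'M[C]_N := Em N i i.+1.
Definition bF (i : nat) : 'M[C]_N := Em N i.+1 i.
Definition bH (i : nat) : 'M[C]_N := Em N i i.

Definition ee (i : nat) : 'M[C]_N := bE i + bF (N - i).
Definition ff (i : nat) : 'M[C]_N := bF i + bE (N - i).
Definition tt : 'M[C]_N := bE n + bF n.
Definition dd (i : nat) : 'M[C]_N := bH i + bH (N.+1 - i).

Definition Xa (i : nat) : 'M[C]_N :=
  if (i < n)%N then ee i else if i == n then tt else ff (N - i).

(* Xr i k = X_{mu_i - mu_{i+k+1}} *)
Fixpoint Xr (i k : nat) : 'M[C]_N :=
  match k with
  | 0 => Xa i
  | k'.+1 => mcomm (Xa i) (Xr i.+1 k')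
  end.

(* tpr m = t_{n-m} *)
Fixpoint tpr (m : nat) : 'M[C]_N :=
  match m with
  | 0 => tt
  | m'.+1 => tpr m' + Xr (n - m' - 1) (N + 2 - 2 * (n - m'))
  end.

Definition tb (i : nat) : 'M[C]_N := tpr (n - i).
Definition hb (i : nat) : 'M[C]_N := 2^-1 *: (tb i + dd i).
Definition hbb (i : nat) : 'M[C]_N := 2^-1 *: (- tb i + dd i).

Definition eL (i : nat) : ('M[C]_n * 'M[C]_n)%type := (Em n i i.+1, 0).
Definition eR (i : nat) : ('M[C]_n * 'M[C]_n)%type := (0, Em n i i.+1).
Definition fL (i : nat) : ('M[C]_n * 'M[C]_n)%type := (Em n i.+1 i, 0).
Definition fR (i : nat) : ('M[C]_n * 'M[C]_n)%type := (0, Em n i.+1 i).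
Definition hL (i : nat) : ('M[C]_n * 'M[C]_n)%type := (Em n i i, 0).
Definition hR (i : nat) : ('M[C]_n * 'M[C]_n)%type := (0, Em n i i).

End Mat.

Definition genSi (C : numClosedFieldType) (n d : nat) (Ui : algType C)
  (iota1 : 'M[C]_(n.*2) -> Ui) (y : Ui) : Prop :=
  y = \sum_(1 <= i < n.+1) iota1 (dd C n i) - d%:R \/
  exists2 i, (1 <= i <= n)%N &
    (y = \prod_(k < d.+1) (iota1 (hb C n i) - k%:R) \/
     y = \prod_(k < d.+1) (iota1 (hbb C n i) - k%:R)).

Definition genS (C : numClosedFieldType) (n d : nat) (U : algType C)
  (iota2 : ('M[C]_n * 'M[C]_n)%type -> U) (y : U) : Prop :=
  y = \sum_(1 <= i < n.+1) (iota2 (hL C n i) + iota2 (hR C n i)) - d%:R \/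
  exists2 i, (1 <= i <= n)%N &
    (y = \prod_(k < d.+1) (iota2 (hL C n i) - k%:R) \/
     y = \prod_(k < d.+1) (iota2 (hR C n i) - k%:R)).

From HB Require Import structures.
From mathcomp Require Import all_boot all_order all_algebra zify.
Import Order.TTheory GRing.Theory Num.Theory.
Local Open Scope ring_scope.

(* Everything hinges on computing rho on the Cartan elements h_i and h_{bar i}.
   Each X_{mu_i - mu_j} is an iterated commutator of the theta-fixed generators
   X_{alpha_k}, and iota1 is a Lie map on g^theta, so rho (X_{mu_i - mu_j}) is
   the image of the corresponding iterated commutator in gl_n (+) gl_n, which a
   computation with matrix units identifies.  In particular
   rho (X_{mu_(i-1) - mu_(2n+2-i)}) = (h_(i-1) - h_i) - (h_{bar(i-1)} - h_{bar i}),
   so telescoping from rho t = h_n - h_{bar n} gives rho t_i = h_i - h_{bar i}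
   and hence rho h_i = h_i, rho h_{bar i} = h_{bar i}.  Thus rho maps the
   generators of the first ideal onto those of the second, and a bijective ring
   morphism matches the two-sided ideals they generate. *)

Section MatrixUnits.
Variables (C : numClosedFieldType) (m : nat).
Local Notation E := (Em C m).
Local Notation J := (Jm C m).

Lemma Em_mul i j k l : (0 < j <= m)%N -> (0 < k <= m)%N ->
  E i j *m E k l = if j == k then E i l else 0.
Proof.
move=> Hj Hk; have jm : (j.-1 < m)%N by lia.
apply/matrixP => a b; rewrite !mxE (bigD1 (Ordinal jm)) //= big1 => [|c cj].
  rewrite addr0 !mxE eqxx andbT; case: (eqVneq j k) => [<-|jk]; rewrite mxE /=.
    by rewrite eqxx -natrM mulnb.
  by rewrite (_ : (j.-1 == k.-1) = false) ?mulr0 //; apply/eqP; lia.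
rewrite !mxE (_ : (c == j.-1 :> nat) = false) ?andbF ?mul0r //.
by apply: contraNF cj => /eqP cj; apply/eqP/val_inj.
Qed.

Lemma mcomm_Em_chain i j l : (0 < j <= m)%N -> (0 < l <= m)%N -> (0 < i <= m)%N ->
  l != i -> mcomm (E i j) (E j l) = E i l.
Proof.
by move=> Hj Hl Hi /negbTE li; rewrite /mcomm !Em_mul // eqxx li subr0.
Qed.

Lemma mcomm_Em_swap i j : (0 < i <= m)%N -> (0 < j <= m)%N ->
  mcomm (E i j) (E j i) = E i i - E j j.
Proof. by move=> Hi Hj; rewrite /mcomm !Em_mul // !eqxx. Qed.

Lemma mcommNl (X Y : 'M[C]_m) : mcomm (- X) Y = - mcomm X Y.
Proof. by rewrite /mcomm mulNmx mulmxN opprB opprK addrC. Qed.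

Lemma mcommNr (X Y : 'M[C]_m) : mcomm X (- Y) = - mcomm X Y.
Proof. by rewrite /mcomm mulNmx mulmxN opprB opprK addrC. Qed.

Lemma Jm_mull (X : 'M[C]_m) a b : (J *m X) a b = X (rev_ord a) b.
Proof.
have ltam := ltn_ord a; rewrite !mxE (bigD1 (rev_ord a)) //= big1 => [|c ca].
  by rewrite addr0 mxE (_ : (a + (m - a.+1) == m.-1)%N) ?mul1r //; apply/eqP; lia.
rewrite mxE (_ : (a + c == m.-1)%N = false) ?mul0r //.
by apply: contraNF ca => /eqP ca; apply/eqP/val_inj => /=; lia.
Qed.

Lemma Jm_mulr (X : 'M[C]_m) a b : (X *m J) a b = X a (rev_ord b).
Proof.
have ltbm := ltn_ord b; rewrite !mxE (bigD1 (rev_ord b)) //= big1 => [|c cb].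
  by rewrite addr0 mxE (_ : (m - b.+1 + b == m.-1)%N) ?mulr1 //; apply/eqP; lia.
rewrite mxE (_ : (c + b == m.-1)%N = false) ?mulr0 //.
by apply: contraNF cb => /eqP cb; apply/eqP/val_inj => /=; lia.
Qed.

Lemma Jm_invol : J *m J = 1%:M.
Proof.
apply/matrixP => a b; rewrite Jm_mull !mxE /=; congr (nat_of_bool _)%:R.
move: (ltn_ord a) (ltn_ord b) => ltam ltbm.
by apply/eqP/eqP => [?|->]; [apply/val_inj => /=|]; lia.
Qed.

Lemma invmx_Jm : invmx J = J.
Proof.
have Junit : J \in unitmx by case: (mulmx1_unit Jm_invol).
by rewrite -[RHS](mulKmx Junit) Jm_invol mulmx1.
Qed.

Lemma theta_mul (X Y : 'M[C]_m) : theta (X *m Y) = theta X *m theta Y.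
Proof. by rewrite /theta invmx_Jm !mulmxA -[_ *m J *m J]mulmxA Jm_invol mulmx1. Qed.

Lemma theta_Em i j : (0 < i <= m)%N -> (0 < j <= m)%N ->
  theta (E i j) = E (m.+1 - i) (m.+1 - j).
Proof.
move=> Hi Hj; apply/matrixP => a b.
move: (ltn_ord a) (ltn_ord b) => ltam ltbm.
rewrite /theta invmx_Jm Jm_mulr Jm_mull !mxE /=.
by congr (nat_of_bool (_ && _))%:R; apply/eqP/eqP; lia.
Qed.

Lemma fixed_by_theta_mcomm (X Y : 'M[C]_m) :
  fixed_by_theta X -> fixed_by_theta Y -> fixed_by_theta (mcomm X Y).
Proof.
rewrite /fixed_by_theta /mcomm => thX thY.
by rewrite {1}/theta mulmxBr mulmxBl -!/(theta _) !theta_mul thX thY.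
Qed.

Lemma fixed_by_theta_Em_pair i j i' j' : (0 < i <= m)%N -> (0 < j <= m)%N ->
  i' = (m.+1 - i)%N -> j' = (m.+1 - j)%N -> fixed_by_theta (E i j + E i' j').
Proof.
move=> Hi Hj -> ->; rewrite /fixed_by_theta /theta mulmxDr mulmxDl -!/(theta _).
by rewrite !theta_Em ?subKn 1?addrC //; lia.
Qed.

End MatrixUnits.

Section RootVectors.
Variables (C : numClosedFieldType) (n : nat).
Local Notation E := (Em C n).

Lemma Xa_fixed i : (0 < i < n.*2)%N -> fixed_by_theta (Xa C n i).
Proof.
move=> Hi; rewrite /Xa.
by case: ltnP => [lt_in|le_ni]; last case: eqVneq => [eq_in|ne_in];
  apply: fixed_by_theta_Em_pair; lia.
Qed.

Lemma Xr_fixed k i : (0 < i)%N -> (i + k < n.*2)%N -> fixed_by_theta (Xr C n i k).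
Proof.
elim: k i => [|k IH] i Hi Hik /=; first by apply: Xa_fixed; lia.
by apply: fixed_by_theta_mcomm; [apply: Xa_fixed|apply: IH]; lia.
Qed.

(* The counterparts in gl_n (+) gl_n of [Xa] and [Xr] under rho; see [rho_Xr]. *)
Definition Ya (i : nat) : 'M[C]_n * 'M[C]_n :=
  if (i < n)%N then eL C n i + eR C n i
  else if i == n then hL C n n - hR C n n
  else fL C n (n.*2 - i) + fR C n (n.*2 - i).

Fixpoint Yr (i k : nat) : 'M[C]_n * 'M[C]_n :=
  if k is k'.+1 then pcomm (Ya i) (Yr i.+1 k') else Ya i.

Lemma Ya_lt i : (i < n)%N -> Ya i = (E i i.+1, E i i.+1).
Proof. by move=> lt_in; rewrite /Ya lt_in; congr (_, _); rewrite /= ?addr0 ?add0r. Qed.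

Lemma Ya_n : Ya n = (E n n, - E n n).
Proof. by rewrite /Ya ltnn eqxx; congr (_, _); rewrite /= ?oppr0 ?addr0 ?add0r. Qed.

Lemma Ya_gt i : (n < i)%N ->
  Ya i = (E (n.*2 - i).+1 (n.*2 - i), E (n.*2 - i).+1 (n.*2 - i)).
Proof.
move=> lt_ni; rewrite /Ya ltnNge ltnW // gtn_eqF //.
by congr (_, _); rewrite /= ?addr0 ?add0r.
Qed.

Lemma Yr_gt k i : (n < i)%N -> (i + k < n.*2)%N ->
  Yr i k = (E (n.*2 - i).+1 (n.*2 - i - k), E (n.*2 - i).+1 (n.*2 - i - k)).
Proof.
elim: k i => [|k IH] i Hi Hik /=; first by rewrite Ya_gt // subn0.
rewrite Ya_gt // IH; try lia.
have -> : (n.*2 - i.+1).+1 = (n.*2 - i)%N by lia.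
have -> : (n.*2 - i.+1 - k = n.*2 - i - k.+1)%N by lia.
by rewrite /pcomm /= mcomm_Em_chain //; lia.
Qed.

Lemma Yr_across c i : (0 < c < i)%N -> (i <= n)%N ->
  Yr i (n.*2 - c - i) = (E i c, - E i c).
Proof.
move=> + le_in; have [k -> {le_in}] : exists k, i = (n - k)%N by exists (n - i)%N; lia.
elim: k => [|k IH] Hci.
  have -> : (n.*2 - c - (n - 0) = (n - c.+1).+1)%N by lia.
  rewrite subn0 /= Ya_n Yr_gt; try lia.
  have -> : (n.*2 - n.+1).+1 = n by lia.
  have -> : (n.*2 - n.+1 - (n - c.+1) = c)%N by lia.
  by rewrite /pcomm /= mcommNl mcomm_Em_chain //; lia.
have -> : (n.*2 - c - (n - k.+1) = (n.*2 - c - (n - k)).+1)%N by lia.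
rewrite /= Ya_lt; last by lia.
have -> : (n - k.+1).+1 = (n - k)%N by lia.
by rewrite IH; try lia; rewrite /pcomm /= mcommNr mcomm_Em_chain //; lia.
Qed.

Lemma Yr_diag a : (0 < a < n)%N ->
  Yr a (n.*2 - a.*2) = (hL C n a - hL C n a.+1) - (hR C n a - hR C n a.+1).
Proof.
move=> Ha; have -> : (n.*2 - a.*2 = (n.*2 - a - a.+1).+1)%N by lia.
rewrite /= Ya_lt ?Yr_across; try lia.
rewrite /pcomm /= mcommNr mcomm_Em_swap; try lia.
by congr (_, _); rewrite /= ?subr0 ?sub0r.
Qed.

End RootVectors.

Lemma scale_half_double (F : numFieldType) (V : lmodType F) (x : V) :
  2^-1 *: (x + x) = x.
Proof. by rewrite -mulr2n -scaler_nat scalerA mulVf ?scale1r ?pnatr_eq0. Qed.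

Lemma in_ideal_bij (A B : nzRingType) (f : {rmorphism A -> B})
    (P : A -> Prop) (Q : B -> Prop) :
  bijective f -> (forall y, P y -> Q (f y)) ->
  (forall z, Q z -> exists2 y, P y & f y = z) ->
  forall x, in_ideal P x <-> in_ideal Q (f x).
Proof.
case=> g fK gK PQ QP x; split=> [[k [a [b [c [Pc ->]]]]]|[k [a [b [c [Qc fx]]]]]].
  exists k, (f \o a), (f \o b), (f \o c); split=> [i|]; first exact: PQ.
  by rewrite rmorph_sum; apply: eq_bigr => i _; rewrite !rmorphM.
exists k, (g \o a), (g \o b), (g \o c); split=> [i|].
  by rewrite /=; have [y Py <-] := QP _ (Qc i); rewrite fK.
apply: (can_inj fK); rewrite fx rmorph_sum; apply: eq_bigr => i _.
by rewrite !rmorphM /= !gK.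
Qed.

Section Transport.
Variables (C : numClosedFieldType) (n d : nat).
Variables (Ui U : algType C) (iota1 : 'M[C]_(n.*2) -> Ui).
Variables (iota2 : 'M[C]_n * 'M[C]_n -> U) (rho : Ui -> U).
Hypotheses (lin1 : lin_map iota1)
           (lie1 : lie_map (@fixed_by_theta C n.*2) (@mcomm C n.*2) iota1).
Hypotheses (lin2 : lin_map iota2) (lie2 : lie_map (fun _ => True) (@pcomm C n) iota2).
Hypotheses (rho_morph : alg_morph rho) (rho_bij : bijective rho).
Hypotheses (rho_e : forall i, (1 <= i <= n.-1)%N ->
              rho (iota1 (ee C n i)) = iota2 (eL C n i) + iota2 (eR C n i))
           (rho_f : forall i, (1 <= i <= n.-1)%N ->
              rho (iota1 (ff C n i)) = iota2 (fL C n i) + iota2 (fR C n i))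
           (rho_d : forall i, (1 <= i <= n)%N ->
              rho (iota1 (dd C n i)) = iota2 (hL C n i) + iota2 (hR C n i))
           (rho_t : rho (iota1 (tt C n)) = iota2 (hL C n n) - iota2 (hR C n n)).

#[local] HB.instance Definition _ := GRing.isLinear.Build C _ _ *:%R iota1 lin1.
#[local] HB.instance Definition _ := GRing.isLinear.Build C _ _ *:%R iota2 lin2.
Let rho_linear : linear rho. Proof. by case: rho_morph. Qed.
Let rho_monoid : monoid_morphism rho. Proof. by case: rho_morph. Qed.
#[local] HB.instance Definition _ := GRing.isLinear.Build C _ _ *:%R rho rho_linear.
#[local] HB.instance Definition _ := GRing.isMonoidMorphism.Build _ _ rho rho_monoid.

Lemma rho_Xa i : (0 < i < n.*2)%N -> rho (iota1 (Xa C n i)) = iota2 (Ya C n i).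
Proof.
move=> Hi; rewrite /Xa /Ya; case: ltnP => [lt_in|le_ni].
  by rewrite rho_e -?raddfD //; lia.
case: eqVneq => [_|ne_in]; first by rewrite rho_t raddfB.
by rewrite rho_f -?raddfD //; lia.
Qed.

Lemma rho_Xr k i : (0 < i)%N -> (i + k < n.*2)%N ->
  rho (iota1 (Xr C n i k)) = iota2 (Yr C n i k).
Proof.
elim: k i => [|k IH] i Hi Hik /=; first by apply: rho_Xa; lia.
have fixed_Xa : fixed_by_theta (Xa C n i) by apply: Xa_fixed; lia.
have fixed_Xr : fixed_by_theta (Xr C n i.+1 k) by apply: Xr_fixed; lia.
by rewrite lie1 // lie2 // rmorphB !rmorphM /= rho_Xa ?IH //; lia.
Qed.

Lemma rho_tb i : (0 < i <= n)%N ->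
  rho (iota1 (tb C n i)) = iota2 (hL C n i) - iota2 (hR C n i).
Proof.
move=> Hi; rewrite /tb.
suff rho_tpr m : (m < n)%N ->
    rho (iota1 (tpr C n m)) = iota2 (hL C n (n - m)) - iota2 (hR C n (n - m)).
  by rewrite rho_tpr ?subKn //; lia.
elim: m => [|m IH] lt_mn; first by rewrite subn0.
rewrite /= raddfD rmorphD /= IH; last by lia.
have -> : (n.*2 + 2 - 2 * (n - m) = n.*2 - (n - m.+1).*2)%N by lia.
have -> : (n - m - 1 = n - m.+1)%N by lia.
rewrite rho_Xr ?Yr_diag; try lia.
have -> : (n - m.+1).+1 = (n - m)%N by lia.
by rewrite !raddfB /= addrACA !subrKC.
Qed.

Lemma rho_hb i : (0 < i <= n)%N -> rho (iota1 (hb C n i)) = iota2 (hL C n i).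
Proof.
move=> Hi; rewrite /hb linearZ raddfD /= linearZ rmorphD /= rho_tb ?rho_d //.
by rewrite addrACA addNr addr0 scale_half_double.
Qed.

Lemma rho_hbb i : (0 < i <= n)%N -> rho (iota1 (hbb C n i)) = iota2 (hR C n i).
Proof.
move=> Hi; rewrite /hbb linearZ raddfD raddfN /= linearZ rmorphD rmorphN /=.
rewrite rho_tb ?rho_d //.
by rewrite opprB subrKA scale_half_double.
Qed.

Lemma rho_sum_dd :
  rho (\sum_(1 <= i < n.+1) iota1 (dd C n i) - d%:R) =
  \sum_(1 <= i < n.+1) (iota2 (hL C n i) + iota2 (hR C n i)) - d%:R.
Proof.
rewrite rmorphB rmorph_nat rmorph_sum /=; congr (_ - _).
by apply: eq_big_nat => i Hi; apply: rho_d.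
Qed.

Lemma rho_prod_hb i : (0 < i <= n)%N ->
  rho (\prod_(k < d.+1) (iota1 (hb C n i) - k%:R)) =
  \prod_(k < d.+1) (iota2 (hL C n i) - k%:R).
Proof.
move=> Hi; rewrite rmorph_prod; apply: eq_bigr => k _.
by rewrite rmorphB rmorph_nat /= rho_hb.
Qed.

Lemma rho_prod_hbb i : (0 < i <= n)%N ->
  rho (\prod_(k < d.+1) (iota1 (hbb C n i) - k%:R)) =
  \prod_(k < d.+1) (iota2 (hR C n i) - k%:R).
Proof.
move=> Hi; rewrite rmorph_prod; apply: eq_bigr => k _.
by rewrite rmorphB rmorph_nat /= rho_hbb.
Qed.

Lemma rho_genSi y : genSi d iota1 y -> genS d iota2 (rho y).
Proof.
case=> [->|[i Hi [->|->]]]; first by left; rewrite rho_sum_dd.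
  by right; exists i => //; left; rewrite rho_prod_hb.
by right; exists i => //; right; rewrite rho_prod_hbb.
Qed.

Lemma genS_rho z : genS d iota2 z -> exists2 y, genSi d iota1 y & rho y = z.
Proof.
case=> [->|[i Hi [->|->]]]; first by eexists; [left|exact: rho_sum_dd].
  by eexists; [right; exists i => //; left|exact: rho_prod_hb].
by eexists; [right; exists i => //; right|exact: rho_prod_hbb].
Qed.

Lemma in_ideal_rho x :
  in_ideal (genSi d iota1) x <-> in_ideal (genS d iota2) (rho x).
Proof. by apply: in_ideal_bij; [exact: rho_bij|exact: rho_genSi|exact: genS_rho]. Qed.

End Transport.

Theorem proposition3 (C : numClosedFieldType) (n d : nat)
  (Hn : (0 < n)%N) (Hd : (0 < d)%N)
  (Ui : algType C) (iota1 : 'M[C]_(n.*2) -> Ui)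
  (HUi : is_UEA (@fixed_by_theta C n.*2) (@mcomm C n.*2) iota1)
  (U : algType C) (iota2 : ('M[C]_n * 'M[C]_n)%type -> U)
  (HU : is_UEA (fun _ => True) (@pcomm C n) iota2)
  (rho : Ui -> U) (Hrho : alg_morph rho) (Hbij : bijective rho)
  (Hre : forall i, (1 <= i <= n.-1)%N ->
     rho (iota1 (ee C n i)) = iota2 (eL C n i) + iota2 (eR C n i))
  (Hrf : forall i, (1 <= i <= n.-1)%N ->
     rho (iota1 (ff C n i)) = iota2 (fL C n i) + iota2 (fR C n i))
  (Hrd : forall i, (1 <= i <= n)%N ->
     rho (iota1 (dd C n i)) = iota2 (hL C n i) + iota2 (hR C n i))
  (Hrt : rho (iota1 (tt C n)) = iota2 (hL C n n) - iota2 (hR C n n)) :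
  forall x : Ui,
    in_ideal (genSi d iota1) x <-> in_ideal (genS d iota2) (rho x).
Proof.
have [lin1 lie1 _] := HUi; have [lin2 lie2 _] := HU.
exact: in_ideal_rho.
Qed.
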